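(* Let $\{X_i\}_{i\ge1}$ be i.i.d. real random variables with a unimodal density $f$ satisfying $\sup_{x\in\mathbb R}f(x)\le C_0$ for some constant $C_0>0$, and let $f_n$ denote the density of $\sum_{i=1}^nX_i$. Then there is a constant $C>0$ such that $\sup_{n\ge1}\sup_{x\in\mathbb R}f_n(x)\le C$. Moreover, if $N$ is a $\{1,2,\dots\}$-valued random variable independent of $\{X_i\}$ and $f_N$ denotes the density of $\sum_{i=1}^NX_i$, then $\sup_{x\in\mathbb R}f_N(x)\le C$. *)

From HB Require Import structures.
From mathcomp Require Import all_boot all_order all_algebra.
From mathcomp Require Import all_classical all_reals all_analysis.
Set Implicit Arguments. Unset Strict Implicit. Unset Printing Implicit Defensive.
Import Order.TTheory GRing.Theory Num.Theory.
Local Open Scope classical_set_scope.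
Local Open Scope ring_scope.

Definition real_rv (d : measure_display) (T : measurableType d) (R : realType)
  (Y : T -> R) : Prop := measurable_fun setT Y.

Definition mutually_indep (d : measure_display) (T : measurableType d)
  (R : realType) (P : probability T R) (I : eqType) (Y : I -> T -> R) : Prop :=
  forall (J : seq I) (B : I -> set R), uniq J ->
    (forall i, measurable (B i)) ->
    P (\big[setI/setT]_(i <- J) (Y i @^-1` B i)) =
    (\prod_(i <- J) P (Y i @^-1` B i))%E.

Definition is_density (d : measure_display) (T : measurableType d)
  (R : realType) (P : probability T R) (Y : T -> R) (g : R -> R) : Prop :=
  measurable_fun setT g /\ (forall x, 0 <= g x) /\
  forall A : set R, measurable A ->
    P (Y @^-1` A) = (\int[@lebesgue_measure R]_(x in A) (g x)%:E)%E.

Definition unimodal (R : realType) (f : R -> R) : Prop :=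
  exists m : R,
    (forall x y, x <= y -> y <= m -> f x <= f y) /\
    (forall x y, m <= x -> x <= y -> f y <= f x).

(* Partial sum S_n = X_1 + ... + X_n (sequence indexed from 0: X 0 is X_1). *)
Definition psum (T : Type) (R : realType) (X : nat -> T -> R) (n : nat) : T -> R :=
  fun t => \sum_(i < n) X i t.

Definition rsum (T : Type) (R : realType) (X : nat -> T -> R) (N : T -> nat) : T -> R :=
  fun t => \sum_(i < N t) X i t.

Definition with_N (T : Type) (R : realType) (X : nat -> T -> R) (N : T -> nat)
  : option nat -> T -> R :=
  fun o => match o with None => fun t => (N t)%:R | Some i => X i end.

From HB Require Import structures.
From mathcomp Require Import all_boot all_order all_algebra.
From mathcomp Require Import all_classical all_reals all_analysis measurable_realfun.
From mathcomp Require Import ring lra.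
Import Order.TTheory GRing.Theory Num.Theory.
Local Open Scope classical_set_scope.
Local Open Scope ring_scope.
Set Implicit Arguments. Unset Strict Implicit. Unset Printing Implicit Defensive.

(* Write
   S_(m+1) = S_m + X_m with X_m independent of S_m.  By Fubini on the law of
   (S_m, X_m), P(S_(m+1) in A) is the S_m-average of P(X_m in A - s), and each
   of these is at most C0 |A| by translation invariance of Lebesgue measure.
   So every law of S_n (n >= 1) is dominated by C0 times Lebesgue measure,
   which forces its density to be at most 2 C0 almost everywhere.  For the
   random index, P(S_N in A) = sum_k P(S_k in A) P(N = k) <= C0 |A| because
   N is independent of the X_i.  The independence of S_m and X_m is proved
   by induction on m, showing that S_m is independent of every cylinder event
   built from indices outside {0, ..., m-1}. *)

Lemma lebesgue_measure_shift (R : realType) (s : R) (A : set R) : measurable A ->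
  lebesgue_measure ((fun y => s + y) @^-1` A) = lebesgue_measure A.
Proof.
move=> mA.
have ms : measurable_fun [set: measurableTypeR R]
    ((fun y => s + y) : _ -> measurableTypeR R) by exact: measurable_funD.
rewrite (@lebesgue_measure_unique _ (pushforward lebesgue_measure
  ((fun y => s + y) : _ -> measurableTypeR R)) _ A mA) //.
move=> _ [[a b] _ <-]; rewrite /pushforward /=.
transitivity (lebesgue_measure `](a - s), (b - s)]%classic); last first.
  congr lebesgue_measure; apply/seteqP.
  by split => y /=; rewrite !in_itv /= ltrBlDl lerBrDl.
rewrite !lebesgue_measure_itv /= !lte_fin ltrD2r.
by case: ifPn => // _; rewrite -!EFinB; congr EFin; ring.
Qed.

Section finite_measure_setX_unique.
Local Open Scope ereal_scope.
Context d1 d2 (T1 : measurableType d1) (T2 : measurableType d2) (R : realType).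

Lemma finite_measure_setX_unique (m1 m2 : {measure set (T1 * T2) -> \bar R}) :
  m1 setT < +oo ->
  (forall A B, measurable A -> measurable B -> m1 (A `*` B) = m2 (A `*` B)) ->
  forall E, measurable E -> m1 E = m2 E.
Proof.
move=> m1oo m12 E mE.
pose G : set (set (T1 * T2)) :=
  [set C | exists A, measurable A /\ exists B, measurable B /\ C = A `*` B].
have GI : setI_closed G.
  move=> _ _ [A1 [mA1 [B1 [mB1 ->]]]] [A2 [mA2 [B2 [mB2 ->]]]].
  rewrite -setXI; exists (A1 `&` A2); split; first exact: measurableI.
  by exists (B1 `&` B2); split => //; exact: measurableI.
apply: (measure_unique G (fun=> setT)) => //.
- rewrite measurable_prod_measurableType; congr <<s _ >>.
  apply/seteqP; split => [_ [A mA [B mB <-]]|_ [A [mA [B [mB ->]]]]].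
    by exists A; split => //; exists B.
  by exists A => //; exists B.
- by move=> _; exists setT; split => //; exists setT; split => //; rewrite setXTT.
- by rewrite bigcup_const.
- by move=> _ [A [mA [B [mB ->]]]]; exact: m12.
Qed.

End finite_measure_setX_unique.

Section indep_event_preimage.
Local Open Scope ereal_scope.
Context d d1 d2 (T : measurableType d) (T1 : measurableType d1)
  (T2 : measurableType d2) (R : realType) (P : probability T R).

Lemma indep_event_preimage_setX (phi : T -> T1 * T2) (C : set T) :
  measurable_fun setT phi -> measurable C ->
  (forall A B, measurable A -> measurable B ->
    P (phi @^-1` (A `*` B) `&` C) = P (phi @^-1` (A `*` B)) * P C) ->
  forall E, measurable E -> P (phi @^-1` E `&` C) = P (phi @^-1` E) * P C.
Proof.
move=> mphi mC indC.
pose c : {nonneg R} := NngNum (fine_ge0 (measure_ge0 P C)).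
have cE : (c%:num)%:E = P C by rewrite /= fineK ?fin_num_measure.
have := @finite_measure_setX_unique _ _ _ _ _
  (pushforward (mrestr P mC) phi) (mscale c (pushforward P phi)).
move=> /(_ mphi mphi) m12 E mE; rewrite muleC -cE; apply: m12 => //.
- change (P (phi @^-1` setT `&` C) < +oo).
  by rewrite preimage_setT setTI (le_lt_trans (probability_le1 P mC)) ?ltry.
- move=> A B mA mB.
  change (P (phi @^-1` (A `*` B) `&` C) = (c%:num)%:E * P (phi @^-1` (A `*` B))).
  by rewrite indC // cE muleC.
Qed.

End indep_event_preimage.

Lemma psumS (T : Type) (R : realType) (X : nat -> T -> R) n :
  psum X n.+1 = psum X n \+ X n.
Proof. by apply/funext => t; rewrite /psum big_ord_recr. Qed.

Lemma measurable_psum d (T : measurableType d) (R : realType) (X : nat -> T -> R) :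
  (forall i, measurable_fun setT (X i)) -> forall n, measurable_fun setT (psum X n).
Proof.
move=> mX; elim=> [|n IH]; last by rewrite psumS; exact: measurable_funD.
rewrite (_ : psum X 0 = cst 0) //.
by apply/funext => t; rewrite /psum big_ord0.
Qed.

Section cylinders.
Local Open Scope ereal_scope.
Context d (T : measurableType d) (R : realType) (P : probability T R).
Variables (I : eqType) (Z : I -> T -> R).
Hypotheses (mZ : forall i, measurable_fun setT (Z i)) (indZ : mutually_indep P Z).

Definition cylinder (J : seq I) (B : I -> set R) : set T :=
  \big[setI/setT]_(i <- J) (Z i @^-1` B i).

Lemma measurable_cylinder J B : (forall i, measurable (B i)) ->
  measurable (cylinder J B).
Proof.
move=> mB; elim: J => [|j J IH]; rewrite /cylinder ?big_nil ?big_cons //.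
by apply: measurableI => //; rewrite -[X in measurable X]setTI; exact: mZ.
Qed.

Lemma cylinder1 k B : cylinder [:: k] B = Z k @^-1` B k.
Proof. by rewrite /cylinder big_seq1. Qed.

Let upd (B : I -> set R) k (D : set R) i := if i == k then D else B i.

Let measurable_upd B k D : (forall i, measurable (B i)) -> measurable D ->
  forall i, measurable (upd B k D i).
Proof. by move=> mB mD i; rewrite /upd; case: eqP. Qed.

Lemma cylinder_upd J B k D : k \notin J -> cylinder J (upd B k D) = cylinder J B.
Proof.
move=> kJ; apply: eq_big_seq => i iJ; rewrite /upd.
by case: eqP => // ik; move: kJ; rewrite -ik iJ.
Qed.

Lemma cylinder_cons J B k D : k \notin J ->
  Z k @^-1` D `&` cylinder J B = cylinder (k :: J) (upd B k D).
Proof.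
move=> kJ; rewrite [RHS]/cylinder big_cons {1}/upd eqxx -/(cylinder _ _).
by rewrite cylinder_upd.
Qed.

Lemma indep_cylinder_cons J B k D : uniq J -> k \notin J ->
  (forall i, measurable (B i)) -> measurable D ->
  P (Z k @^-1` D `&` cylinder J B) = P (Z k @^-1` D) * P (cylinder J B).
Proof.
move=> uJ kJ mB mD; have ukJ : uniq (k :: J) by rewrite /= kJ.
have mB' := measurable_upd k mB mD.
rewrite cylinder_cons // /cylinder indZ // big_cons {1}/upd eqxx -indZ //.
by rewrite -/(cylinder _ _) cylinder_upd.
Qed.

End cylinders.

Section densities.
Local Open Scope ereal_scope.
Context d (T : measurableType d) (R : realType) (P : probability T R).

Lemma density_prob_le (Y : T -> R) (f : R -> R) (C0 : R) :
  is_density P Y f -> (forall x, f x <= C0)%R ->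
  forall A, measurable A -> P (Y @^-1` A) <= C0%:E * lebesgue_measure A.
Proof.
move=> [mf [f0 fD]] fC A mA; rewrite fD // -integral_cst //.
apply: ge0_le_integral => //.
- by move=> x _; rewrite lee_fin.
- by apply/measurable_EFinP; exact: measurable_funTS.
- by move=> x _; rewrite lee_fin.
Qed.

Lemma prob_add_le_density (S Y : T -> R) (f : R -> R) (C0 : R) :
  measurable_fun setT S -> measurable_fun setT Y ->
  (forall D1 D2, measurable D1 -> measurable D2 ->
    P (S @^-1` D1 `&` Y @^-1` D2) = P (S @^-1` D1) * P (Y @^-1` D2)) ->
  is_density P Y f -> (forall x, f x <= C0)%R ->
  forall A, measurable A ->
  P ((S \+ Y)%R @^-1` A) <= C0%:E * lebesgue_measure A.
Proof.
move=> mS mY indSY dY fC A mA.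
have mSY : measurable_fun setT (fun t => (S t, Y t)) := measurable_fun_pair mS mY.
pose muS := distribution P (mfun_Sub (mem_set mS)).
pose muY := distribution P (mfun_Sub (mem_set mY)).
have lawSY E : measurable E -> P ((fun t => (S t, Y t)) @^-1` E) = (muS \x muY) E.
  move=> mE; apply/esym/(product_measure_unique (m' := pushforward P _)) => //.
have msum : measurable ((fun p : R * R => p.1 + p.2)%R @^-1` A).
  rewrite -[X in measurable X]setTI.
  exact: (measurable_funD measurable_fst measurable_snd measurableT mA).
rewrite (_ : _ @^-1` A =
  (fun t => (S t, Y t)) @^-1` ((fun p => p.1 + p.2)%R @^-1` A)) //.
rewrite lawSY // [X in X <= _]/=.
have shiftA s : xsection ((fun p : R * R => p.1 + p.2)%R @^-1` A) s =
    (fun y => s + y)%R @^-1` A.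
  by apply/seteqP; split => y; rewrite /xsection /= inE.
have mshiftA s : measurable ((fun y => s + y)%R @^-1` A).
  rewrite -[X in measurable X]setTI.
  by apply: (@measurable_funD _ _ R setT (cst s) id).
apply: le_trans (@ge0_le_integral _ _ _ muS setT measurableT _
   (cst (C0%:E * lebesgue_measure A)) _ (measurable_fun_xsection muY msum) _ _) _.
- by move=> x _; exact: measure_ge0.
- exact: measurable_cst.
- move=> s _ /=; rewrite shiftA -(lebesgue_measure_shift s mA).
  exact: (density_prob_le dY fC (mshiftA s)).
rewrite integral_cst // [X in _ * X <= _](_ : _ = 1) ?mule1 //.
exact: probability_setT.
Qed.

(* A set where [g > 2 C0] has Lebesgue measure [L] with [2 C0 L <= C0 L], and
   [L] is finite because [2 C0 L <= 1]; hence [L = 0]. *)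
Lemma ae_density_le (Y : T -> R) (g : R -> R) (C0 : R) : (0 < C0)%R ->
  measurable_fun setT Y -> is_density P Y g ->
  (forall A, measurable A -> P (Y @^-1` A) <= C0%:E * lebesgue_measure A) ->
  {ae lebesgue_measure, forall x, (g x <= 2 * C0)%R}.
Proof.
move=> C0_gt0 mY [mg [g0 gD]] PY.
pose A := g @^-1` `](2 * C0)%R, +oo[%classic.
have mA : measurable A.
  by rewrite -[X in measurable X]setTI; apply: mg => //; exact: measurable_itv.
exists A; split => //; last first.
  by move=> x /= /negP; rewrite /A /= in_itv /= andbT ltNge.
set L := lebesgue_measure A.
have L_ge0 : 0 <= L by exact: measure_ge0.
have lowA : (2 * C0)%:E * L <= P (Y @^-1` A).
  rewrite gD // -integral_cst //; apply: ge0_le_integral => //.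
  - by move=> x _; rewrite lee_fin mulr_ge0 // ltW.
  - by apply/measurable_EFinP; exact: measurable_funTS.
  - by move=> x; rewrite /A /= in_itv /= andbT lee_fin => /ltW.
have le1 : (2 * C0)%:E * L <= 1.
  apply: le_trans lowA _; apply: probability_le1.
  by rewrite -[X in measurable X]setTI; exact: mY.
have leC0 : (2 * C0)%:E * L <= C0%:E * L := le_trans lowA (PY _ mA).
clear lowA.
move: L L_ge0 le1 leC0 => [r| |] //; last first.
  by move=> _; rewrite mulry gtr0_sg ?mul1e // mulr_gt0.
rewrite !lee_fin => r_ge0 _ le2; congr EFin; apply/eqP.
by rewrite eq_le r_ge0 andbT; nra.
Qed.

End densities.

Section partial_sums.
Local Open Scope ereal_scope.
Context d (T : measurableType d) (R : realType) (P : probability T R).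
Variables (I : eqType) (Z : I -> T -> R) (idx : nat -> I).
Hypotheses (mZ : forall i, measurable_fun setT (Z i))
  (indZ : mutually_indep P Z) (idx_inj : injective idx).

Let X n := Z (idx n).

Let mX n : measurable_fun setT (X n). Proof. exact: mZ. Qed.

Let psum_indep m := forall J B D, uniq J -> (forall i, measurable (B i)) ->
  measurable D -> (forall j, (j < m)%N -> idx j \notin J) ->
  P (psum X m @^-1` D `&` cylinder Z J B) =
  P (psum X m @^-1` D) * P (cylinder Z J B).

Let psum_indep_next m : psum_indep m -> forall D1 D2,
  measurable D1 -> measurable D2 ->
  P (psum X m @^-1` D1 `&` X m @^-1` D2) =
  P (psum X m @^-1` D1) * P (X m @^-1` D2).
Proof.
move=> indm D1 D2 mD1 mD2.
have := indm [:: idx m] (fun=> D2) D1; rewrite cylinder1; apply => //.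
by move=> j jm; rewrite inE (inj_eq idx_inj) ltn_eqF.
Qed.

Let psum_indepS m : psum_indep m -> psum_indep m.+1.
Proof.
move=> indm J B D uJ mB mD nJ.
have nJm : idx m \notin J by exact: nJ.
have mC := measurable_cylinder mZ J mB.
have msum : measurable ((fun p : R * R => p.1 + p.2)%R @^-1` D).
  rewrite -[X in measurable X]setTI.
  exact: (measurable_funD measurable_fst measurable_snd measurableT mD).
rewrite psumS; apply: (@indep_event_preimage_setX _ _ _ _ _ _ _ _
  (fun t => (psum X m t, X m t)) _ _ mC _ _ msum).
  exact/measurable_fun_pair/mX/measurable_psum.
move=> D1 D2 mD1 mD2.
rewrite (_ : _ @^-1` (D1 `*` D2) = psum X m @^-1` D1 `&` X m @^-1` D2) //.
rewrite -setIA (cylinder_cons Z) // indm //; first last.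
- move=> j jm; rewrite inE negb_or (inj_eq idx_inj) ltn_eqF //.
  by rewrite nJ // ltnW.
- by move=> i; case: eqP.
- by rewrite /= nJm.
rewrite -(cylinder_cons Z) // indep_cylinder_cons // psum_indep_next //.
by rewrite muleA.
Qed.

Lemma indep_psum_cylinder m : psum_indep m.
Proof.
elim: m => [|m IH]; last exact: psum_indepS.
move=> J B D _ _ _ _; have [D0|nD0] := pselect (D 0%R).
- rewrite (_ : _ @^-1` D = setT) ?setTI ?probability_setT ?mul1e //.
  by apply/seteqP; split => t //= _; rewrite /psum big_ord0.
- rewrite (_ : _ @^-1` D = set0) ?set0I ?measure0 ?mul0e //.
  by apply/seteqP; split => t //=; rewrite /psum big_ord0.
Qed.

Lemma psum_prob_le m f C0 : is_density P (X m) f -> (forall x, f x <= C0)%R ->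
  forall A, measurable A ->
  P (psum X m.+1 @^-1` A) <= C0%:E * lebesgue_measure A.
Proof.
rewrite psumS; apply: prob_add_le_density => //; first exact: measurable_psum.
exact/psum_indep_next/indep_psum_cylinder.
Qed.

End partial_sums.

Lemma rsum_preimage (T : Type) (R : realType) (X : nat -> T -> R) (N : T -> nat)
  (A : set R) :
  rsum X N @^-1` A = \bigcup_k (psum X k @^-1` A `&` N @^-1` [set k]).
Proof.
apply/seteqP; split => t /=; first by move=> At; exists (N t).
by move=> [k _ [At Nt]]; rewrite /rsum Nt.
Qed.

Section random_sum.
Local Open Scope ereal_scope.
Context d (T : measurableType d) (R : realType) (P : probability T R).
Variables (X : nat -> T -> R) (N : T -> nat) (f : R -> R) (C0 : R).
Hypotheses (mX : forall i, measurable_fun setT (X i))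
  (mN : measurable_fun setT (fun t => (N t)%:R : R))
  (N_ge1 : forall t, (1 <= N t)%N) (indXN : mutually_indep P (with_N X N))
  (dX : forall i, is_density P (X i) f) (fC : forall x, (f x <= C0)%R)
  (C0_gt0 : (0 < C0)%R).

Let eventNE k : N @^-1` [set k] = with_N X N None @^-1` [set k%:R].
Proof.
by apply/seteqP; split => t /= => [->//|/eqP]; rewrite eqr_nat => /eqP.
Qed.

Let measurable_eventN k : measurable (N @^-1` [set k]).
Proof.
by rewrite eventNE -[X in measurable X]setTI; exact: mN (measurable_set1 _).
Qed.

Let measurable_psum_eventN k A : measurable A ->
  measurable (psum X k @^-1` A `&` N @^-1` [set k]).
Proof.
move=> mA; apply: measurableI => //.
by rewrite -[X in measurable X]setTI; exact: measurable_psum.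
Qed.

Let prob_psum_eventN_le k A : measurable A ->
  P (psum X k @^-1` A `&` N @^-1` [set k]) <=
  C0%:E * lebesgue_measure A * P (N @^-1` [set k]).
Proof.
move=> mA; case: k => [|k].
  rewrite (_ : _ `&` _ = set0) ?measure0.
    by rewrite mule_ge0 ?measure_ge0 // mule_ge0 ?measure_ge0 // lee_fin ltW.
  by apply/seteqP; split => t // [_ /= Nt0]; move: (N_ge1 t); rewrite Nt0.
have mXN o : measurable_fun setT (with_N X N o) by case: o.
rewrite eventNE -(cylinder1 (with_N X N) None (fun=> [set k.+1%:R])).
rewrite (indep_psum_cylinder mXN indXN Some_inj) //.
apply: lee_wpmul2r; first exact: measure_ge0.
exact: (psum_prob_le mXN indXN Some_inj (dX k) fC mA).
Qed.

Lemma measurable_rsum : measurable_fun setT (rsum X N).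
Proof.
move=> _ A mA; rewrite setTI rsum_preimage.
by apply: bigcupT_measurable => k; exact: measurable_psum_eventN.
Qed.

Lemma rsum_prob_le A : measurable A ->
  P (rsum X N @^-1` A) <= C0%:E * lebesgue_measure A.
Proof.
move=> mA.
have cover : \bigcup_k N @^-1` [set k] = setT.
  by apply/seteqP; split => t // _; exists (N t).
rewrite rsum_preimage measure_bigcup; last first.
- exact/trivIset_setIl/trivIset_preimage1.
- by move=> k _; exact: measurable_psum_eventN.
have [->|LAoo] := eqVneq (lebesgue_measure A) +oo.
  by rewrite mulry gtr0_sg ?mul1e ?leey.
have LAfin : lebesgue_measure A \is a fin_num.
  by rewrite ge0_fin_numE ?measure_ge0 // ltey.
apply: le_trans (lee_nneseries _ (fun k _ => prob_psum_eventN_le k mA)) _.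
  by move=> k _ _; exact: measure_ge0.
rewrite -(fineK LAfin) -EFinM nneseriesZl; last by move=> k _; exact: measure_ge0.
rewrite -measure_bigcup //; last exact: trivIset_preimage1.
by rewrite cover [X in _ * X](_ : _ = 1) ?mule1 //; exact: probability_setT.
Qed.

End random_sum.

Unset Implicit Arguments. Set Strict Implicit.

Theorem lemmaA3 (d : measure_display) (T : measurableType d) (R : realType)
  (P : probability T R) (X : nat -> T -> R) (f : R -> R) (C0 : R) :
  (forall i, real_rv (X i)) ->
  mutually_indep P X ->
  (forall i, is_density P (X i) f) ->
  unimodal f ->
  0 < C0 -> (forall x, f x <= C0) ->
  exists C : R, 0 < C /\
    (forall (n : nat) (g : R -> R), (1 <= n)%N ->
       is_density P (psum X n) g ->
       {ae @lebesgue_measure R, forall x, g x <= C}) /\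
    (forall (N : T -> nat) (g : R -> R),
       real_rv (fun t => (N t)%:R : R) ->
       (forall t, (1 <= N t)%N) ->
       mutually_indep P (with_N X N) ->
       is_density P (rsum X N) g ->
       {ae @lebesgue_measure R, forall x, g x <= C}).
Proof.
move=> mX indX dX _ C0_gt0 fC.
exists (2 * C0); split; first by rewrite mulr_gt0.
split=> [[|n] g // _ dg|N g mN N_ge1 indXN dg].
- apply: (ae_density_le C0_gt0 (measurable_psum mX n.+1) dg).
  exact: (psum_prob_le mX indX (@inj_id nat) (dX n) fC).
- apply: (ae_density_le C0_gt0 (measurable_rsum mX mN) dg).
  exact: (rsum_prob_le mX mN N_ge1 indXN dX fC C0_gt0).
Qed.
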